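(* For every $\omega\in\Omega^*$, $W^*\chi_\omega=\varphi_\omega$, i.e. $\chi_\omega(Wf)=\varphi_\omega(f)$ for all $f\in L^{\infty}(\mathbb{R}_+^{\times})$.
   Context: $L^{\infty}(\mathbb{R}_+)$ and $L^{\infty}(\mathbb{R}_+^{\times})$ are the real-valued essentially bounded measurable functions on $[0,\infty)$ and $[1,\infty)$. $W:L^{\infty}(\mathbb{R}_+^{\times})\to L^{\infty}(\mathbb{R}_+)$, $(Wf)(x)=f(e^x)$, with adjoint $(W^*\chi)(f)=\chi(Wf)$. Let $\beta\mathbb{N}_0$ be the Stone–Čech compactification of $\mathbb{N}_0$ (points = ultrafilters), $\tau$ the extension of $n\mapsto n+1$, $\Omega=(\beta\mathbb{N}_0\times[0,1])/\sim$ with $(\tau\eta,0)\sim(\eta,1)$, containing $\mathbb{R}_+$ via $(n,t)\mapsto n+t$, $\Omega^*=\Omega\setminus\mathbb{R}_+$; each $\omega=(\eta,t)$ is identified with the ultrafilter $\{A+t:A\in\eta\}$ on $\mathbb{R}_+$, and $e^\omega=\{e^A:A\in\omega\}$ is an ultrafilter on $[1,\infty)$. Define $\chi_\omega(g)=\omega\text{-}\lim_xe^{-x}\int_0^xg(t)e^t\,dt$ for $g\in L^{\infty}(\mathbb{R}_+)$ and $\varphi_\omega(f)=e^\omega\text{-}\lim_x\frac1x\int_1^xf(t)\,dt$ for $f\in L^{\infty}(\mathbb{R}_+^{\times})$ (limits along ultrafilters). *)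

From HB Require Import structures.
From mathcomp Require Import all_boot all_order all_algebra.
From mathcomp Require Import all_classical all_reals all_analysis.
Set Implicit Arguments. Unset Strict Implicit. Unset Printing Implicit Defensive.
Import Order.TTheory GRing.Theory Num.Theory.
Import numFieldNormedType.Exports.
Local Open Scope classical_set_scope.
Local Open Scope ring_scope.

(* A point of βN_0 \ N_0 : a free (non-principal) ultrafilter on N_0. *)
Definition free_ultrafilter (eta : set_system nat) : Prop :=
  UltraFilter eta /\ forall n : nat, ~ eta [set n].

Section Defs.
Variable R : realType.
Notation mu := (@lebesgue_measure R).

(* The ultrafilter on R_+ associated with omega = (eta, t):
   generated by {A + t : A in eta}, i.e. the image of eta under n |-> n + t. *)
Definition omega_filter (eta : set_system nat) (t : R) : set_system R :=
  (fun n : nat => n%:R + t) @ eta.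

Definition exp_omega_filter (eta : set_system nat) (t : R) : set_system R :=
  expR @ omega_filter eta t.

(* f in L^infty(R_+^x) (represented by a function R -> R, only its values on
   [1,oo) matter): measurable on [1,oo) and essentially bounded there. *)
Definition Linf_mult (f : R -> R) : Prop :=
  measurable_fun (`[1%R, +oo[ : set R) f /\
  exists M : R, {ae mu, forall x : R, (`[1%R, +oo[%classic : set R) x -> `|f x| <= M}.

Definition W (f : R -> R) : R -> R := fun x => f (expR x).

Definition chi (eta : set_system nat) (t : R) (g : R -> R) : R :=
  lim ((fun x : R => expR (- x) * (\int[mu]_(s in `[0%R, x]) (g s * expR s)))
         @ omega_filter eta t).

Definition phi (eta : set_system nat) (t : R) (f : R -> R) : R :=
  lim ((fun x : R => x^-1 * (\int[mu]_(s in `[1%R, x]) f s))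
         @ exp_omega_filter eta t).
End Defs.

(* The substitution u = e^s turns e^{-x} \int_0^x f(e^s) e^s ds into
   e^{-x} \int_1^{e^x} f(u) du, so the function whose omega-limit defines
   chi_omega(W f) is the composite with exp of the function whose
   e^omega-limit defines phi_omega(f); as e^omega is the image of omega
   under exp, the two limits agree, for any filter omega whatsoever.
   For a bounded measurable f the substitution is obtained by identifying
   the image under exp of the measure e^s ds on [a, b] with Lebesgue measure
   on [e^a, e^b]: both measures give the same mass to every ray ]-oo, y]. *)
From HB Require Import structures.
From mathcomp Require Import all_boot all_order all_algebra.
From mathcomp Require Import all_classical all_reals all_analysis.
From mathcomp Require Import unstable measurable_realfun.
Import Order.TTheory GRing.Theory Num.Theory.
Import numFieldNormedType.Exports.
Local Open Scope classical_set_scope.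
Local Open Scope ring_scope.

Section measure_on_rays.
Context {R : realType}.
Local Notation RL := (measurableTypeR R).
Implicit Types m : {measure set RL -> \bar R}.

Lemma measure_itv_ocE m (c d : R) : c <= d -> (m `]-oo, d]%classic < +oo)%E ->
  m `]c, d]%classic = (m `]-oo, d]%classic - m `]-oo, c]%classic)%E.
Proof.
move=> cd mdoo.
have -> : `]c, d]%classic = `]-oo, d] `\` `]-oo, c] :> set RL.
  apply/seteqP; split => s /=; rewrite !in_itv/=.
    by move=> /andP[cs sd]; split => //; apply/negP; rewrite -ltNge.
  by move=> [sd /negP]; rewrite -ltNge => ->.
rewrite measureD//; congr (_ - m _)%E.
apply/seteqP; split => s /=; rewrite !in_itv/=; first by case.
by move=> sc; split => //; exact: le_trans sc cd.
Qed.

Lemma measure_eq_rays m1 m2 :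
  (forall y, m1 `]-oo, y]%classic < +oo)%E ->
  (forall y, m1 `]-oo, y]%classic = m2 `]-oo, y]%classic) ->
  forall A, measurable A -> m1 A = m2 A.
Proof.
move=> m1oo m12.
apply: (@measure_unique _ _ RL (@ocitv R)
  (fun k => `](- k%:R), k%:R]%classic)) => //.
- exact: (@ocitvI R).
- by move=> k; exact: is_ocitv.
- rewrite -subTset => x _ /=.
  by exists (Num.bound x); rewrite //= in_itv/= ltrNl ltrNbound ltW// ltr_bound.
- move=> _ /ocitvP[->|[[c d]/= /ltW cd ->]]; first by rewrite !measure0.
  by rewrite !measure_itv_ocE// -?m12.
- move=> k; apply: le_lt_trans (m1oo k%:R).
  by apply: le_measure; rewrite ?inE// => x /=; rewrite !in_itv/= => /andP[].
Qed.

End measure_on_rays.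

Section integral_density.
Context {d} {T : measurableType d} {R : realType}.
Context {mu : {sigma_finite_measure set T -> \bar R}}
  {nu : {finite_measure set T -> \bar R}} {h : T -> \bar R}.
Hypothesis mh : measurable_fun setT h.
Hypothesis nuE : forall A, measurable A -> nu A = (\int[mu]_(x in A) h x)%E.

Lemma density_dominates : nu `<< mu.
Proof.
apply/null_content_dominatesP => A mA muA0.
by rewrite nuE//; apply: null_set_integral => //; exact: measurable_funTS.
Qed.

Lemma integral_density (D : set T) (F : T -> \bar R) : measurable D ->
  nu.-integrable D F ->
  (\int[nu]_(x in D) F x = \int[mu]_(x in D) (F x * h x))%E.
Proof.
move=> mD iF.
rewrite -(Radon_Nikodym_change_of_variables density_dominates mD iF).
have iRN : mu.-integrable setT (Radon_Nikodym (charge_of_finite_measure nu) mu).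
  by apply: Radon_Nikodym_integrable; exact: density_dominates.
apply: ae_eq_integral => //.
- apply: emeasurable_funM; first exact: (measurable_int _ iF).
  by apply: measurable_funTS; exact: (measurable_int _ iRN).
- by apply: emeasurable_funM; [exact: (measurable_int _ iF)|exact: measurable_funTS].
- apply: ae_eqe_mul2l; apply: integral_ae_eq => //.
  + exact: integrableS iRN.
  + exact: measurable_funTS.
  + move=> A AD mA.
    by rewrite -Radon_Nikodym_integral -?nuE//; exact: density_dominates.
Qed.

End integral_density.

Section expR_substitution.
Context {R : realType}.
Local Notation mu := (@lebesgue_measure R).
Local Notation RL := (measurableTypeR R).

Lemma integral_expR (a b : R) : a <= b ->
  (\int[mu]_(s in `[a, b]) (expR s)%:E = (expR b - expR a)%:E)%E.
Proof.
rewrite le_eqVlt => /predU1P[<-|ab].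
  by rewrite set_itv1 integral_set1 subrr.
rewrite (@continuous_FTC2 _ expR expR)//.
- by apply: continuous_subspaceT => y; exact: continuous_expR.
- split.
  + by move=> y _; exact: ex_derive.
  + by apply: cvg_at_right_filter; exact: continuous_expR.
  + by apply: cvg_at_left_filter; exact: continuous_expR.
- by move=> y _; rewrite derive1E; exact: derive_val.
Qed.

Lemma lebesgue_measure_itvcc (c e : R) : c <= e -> mu `[c, e]%classic = (e - c)%:E.
Proof.
move=> ce; rewrite lebesgue_measure_itv/= lte_fin.
case: ltP => [_|ec]; first by rewrite EFinB.
by rewrite (@le_anti _ _ e c) ?ec ?ce// subrr.
Qed.

Variables a b : R.
Hypothesis ab : a <= b.

Definition expR_density : RL -> \bar R := (EFin \o expR) \_ `[a, b].

Lemma measurable_expR_density : measurable_fun setT expR_density.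
Proof.
apply/(measurable_restrictT _ _).1 => //.
by apply/measurable_EFinP; apply: measurable_funTS; exact: measurable_expR.
Qed.

Lemma expR_density_ge0 s : (0 <= expR_density s)%E.
Proof. by rewrite /expR_density patchE; case: ifP; rewrite ?lee_fin ?expR_ge0. Qed.

Lemma integrable_expR_density : mu.-integrable setT expR_density.
Proof.
apply/integrableP; split; first exact: measurable_expR_density.
under eq_integral do rewrite gee0_abs ?expR_density_ge0//.
by rewrite -integral_mkcondr setTI integral_expR// ltry.
Qed.

Definition expR_measure (A : set RL) : \bar R :=
  (\int[mu]_(s in A) expR_density s)%E.

Let expR_measure0 : expR_measure set0 = 0%E.
Proof. exact: integral_set0. Qed.

Let expR_measure_ge0 A : (0 <= expR_measure A)%E.
Proof. by apply: integral_ge0 => s _; exact: expR_density_ge0. Qed.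

Let expR_measure_sigma_additive : semi_sigma_additive expR_measure.
Proof.
exact: semi_sigma_additive_nng_induced measurable_expR_density expR_density_ge0.
Qed.

HB.instance Definition _ := isMeasure.Build _ _ _ expR_measure
  expR_measure0 expR_measure_ge0 expR_measure_sigma_additive.

Let expR_measure_fin : fin_num_fun expR_measure.
Proof.
move=> A mA; apply: integrable_fin_num => //.
exact: integrableS integrable_expR_density.
Qed.

HB.instance Definition _ :=
  Measure_isFinite.Build _ _ _ expR_measure expR_measure_fin.

Lemma expR_measure_preimage_ray y :
  expR_measure (expR @^-1` `]-oo, y]) = mu (`]-oo, y] `&` `[expR a, expR b]).
Proof.
rewrite /expR_measure /expR_density -integral_mkcondr.
have [ay|ya] := leP (expR a) y; last first.
  rewrite (_ : _ `&` `[a, b] = set0) ?integral_set0.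
    rewrite (_ : _ `&` _ = set0) ?measure0//; apply/seteqP; split => s //=.
    rewrite !in_itv/= => -[sy /andP[sa _]].
    by move: ya; rewrite ltNge (le_trans sa sy).
  apply/seteqP; split => s //=; rewrite !in_itv/= => -[sy /andP[sa _]].
  by move: ya; rewrite ltNge (le_trans _ sy)// ler_expR.
have y0 : 0 < y := lt_le_trans (expR_gt0 a) ay.
have aly : a <= ln y by rewrite -ler_expR lnK.
have -> : (expR @^-1` `]-oo, y]) `&` `[a, b] = `[a, Num.min (ln y) b]%classic.
  apply/seteqP; split => s /=;
    rewrite !in_itv/= le_min -[X in expR s <= X]lnK ?posrE// ler_expR.
    by move=> [-> /andP[-> ->]].
  by move=> /and3P[-> -> ->].
have -> : `]-oo, y] `&` `[expR a, expR b] = `[expR a, Num.min y (expR b)]%classic.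
  apply/seteqP; split => s /=; rewrite !in_itv/= le_min.
    by move=> [-> /andP[-> ->]].
  by move=> /and3P[-> -> ->].
have expR_min : expR (Num.min (ln y) b) = Num.min y (expR b).
  have ylnK : expR (ln y) = y by rewrite lnK ?posrE.
  by rewrite -[in RHS]ylnK /Num.min ltr_expR; case: ifP.
rewrite integral_expR ?le_min ?aly// lebesgue_measure_itvcc ?le_min ?ay ?ler_expR//.
by rewrite expR_min.
Qed.

Lemma pushforward_expR_measure A : measurable A ->
  pushforward expR_measure expR A = mu (A `&` `[expR a, expR b]).
Proof.
have mI : measurable (`[expR a, expR b] : set RL) by [].
(* the measure structure of a pushforward is only inferred with its types explicit *)
apply: (@measure_eq_rays R (@pushforward _ _ RL RL R expR_measure expR)
  (mrestr mu mI)).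
- by move=> y; rewrite ltey_eq fin_num_measure.
- exact: expR_measure_preimage_ray.
Qed.

Lemma integral_expR_substitution (g : R -> R) :
  measurable_fun `[expR a, expR b] g ->
  mu.-integrable `[expR a, expR b] (EFin \o g) ->
  (\int[mu]_(u in `[expR a, expR b]) (g u)%:E =
   \int[mu]_(s in `[a, b]) (g (expR s) * expR s)%:E)%E.
Proof.
move=> mg ig; set D := `[expR a, expR b]%classic.
have mD : measurable (D : set RL) by exact: measurable_itv.
have mexpR : measurable_fun setT (expR : RL -> RL) by exact: measurable_expR.
pose G := (EFin \o g) \_ D.
have mG : measurable_fun setT G.
  by apply/(measurable_restrictT _ _).1 => //; exact/measurable_EFinP.
have GE : {in D, forall u, G u = (g u)%:E} by move=> u uD; rewrite /G patchE uD.
have pushE A : measurable A -> A `<=` D -> pushforward expR_measure expR A = mu A.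
  by move=> mA AD; rewrite pushforward_expR_measure// setIidl.
have preD : expR @^-1` D = `[a, b]%classic.
  by apply/seteqP; split => s; rewrite /D /= !in_itv/= !ler_expR.
have iGexpR : expR_measure.-integrable (expR @^-1` D) (G \o expR).
  apply/integrableP; split.
    by apply: measurable_funTS; exact: measurableT_comp.
  rewrite -(ge0_integral_pushforward mexpR _ (f := abse \o G))//.
  - rewrite (eq_measure_integral mu) => [|A mA AD]; last exact: pushE.
    rewrite (eq_integral (fun u : RL => `|(g u)%:E|%E)) => [|u uD];
      last by rewrite /= GE.
    by case/integrableP : ig.
  - by apply: measurableT_comp => //; exact: measurable_funTS.
  - by move=> u _; exact: abse_ge0.
transitivity (\int[mu]_(u in D) G u)%E.
  by apply: eq_integral => u uD; rewrite GE.
rewrite (eq_measure_integral (@pushforward _ _ RL RL R expR_measure expR))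
  => [|A mA AD]; last exact/esym/pushE.
rewrite integral_pushforward//.
rewrite (integral_density (mu := mu) measurable_expR_density _ _ _ _ iGexpR)//.
  rewrite preD; apply: eq_integral => s; rewrite inE => sab.
  rewrite /= /expR_density !patchE mem_set// GE ?EFinM//.
  by rewrite -preD in sab; exact: mem_set.
by rewrite preD.
Qed.

End expR_substitution.

Section Linf_mult.
Context {R : realType}.
Local Notation mu := (@lebesgue_measure R).

Lemma Linf_mult_measurable (f : R -> R) (c e : R) : 1 <= c -> Linf_mult f ->
  measurable_fun `[c, e] f.
Proof.
move=> c1 [mf _]; apply: measurable_funS mf => // u /=.
by rewrite !in_itv/= andbT => /andP[/(le_trans c1)].
Qed.

Lemma Linf_mult_integrable (f : R -> R) (c e : R) : 1 <= c -> Linf_mult f ->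
  mu.-integrable `[c, e] (EFin \o f).
Proof.
move=> c1 fLinf.
have mf : measurable_fun `[c, e] f := Linf_mult_measurable _ _ _ c1 fLinf.
case: fLinf => _ [M fM].
apply/integrableP; split; first exact/measurable_EFinP.
apply: le_lt_trans (integral_le_bound `|M|%:E _ _ _ _) _ => //.
- exact/measurable_EFinP.
- apply: (filterS (Filter := ae_filter_ringOfSetsType mu)) fM => u fuM uce.
  have u1 : `[1, +oo[%classic u.
    by move: uce; rewrite /= !in_itv/= andbT => /andP[/(le_trans c1)].
  by rewrite lee_fin (le_trans (fuM u1)) ?ler_norm.
- apply: lte_mul_pinfty => //.
  rewrite -[X in (X < _)%E]/(mu `[c, e]%classic) lebesgue_measure_itv/=.
  by case: ifP => _; rewrite -?EFinB ?ltry.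
Qed.

Lemma Rintegral_W_expR (f : R -> R) (y : R) : Linf_mult f ->
  \int[mu]_(s in `[0, y]) (W f s * expR s) = \int[mu]_(u in `[1, expR y]) f u.
Proof.
move=> fLinf; have [y0|y0] := leP 0 y; last first.
  rewrite !set_itv_ge ?Rintegral_set0// bnd_simp -ltNge//.
  by rewrite -expR0 ltr_expR.
have e01 : 1 <= expR (0 : R) by rewrite expR0.
rewrite /Rintegral -[in RHS]expR0 integral_expR_substitution//.
- exact: Linf_mult_measurable.
- exact: Linf_mult_integrable.
Qed.

End Linf_mult.

Theorem theorem4p1 (R : realType) (eta : set_system nat) (t : R) :
  free_ultrafilter eta -> 0 <= t <= 1 ->
  forall f : R -> R, Linf_mult f -> chi eta t (W f) = phi eta t f.
Proof.
move=> _ _ f fLinf; rewrite /chi /phi.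
have -> : (fun x => expR (- x) *
             \int[lebesgue_measure]_(s in `[0, x]) (W f s * expR s)) =
    (fun x => (expR x)^-1 * \int[lebesgue_measure]_(u in `[1, expR x]) f u).
  by apply/funext => x; rewrite expRN Rintegral_W_expR.
by [].
Qed.
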